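(* Let $\mathcal{A}=\{\mathtt n,\mathtt e,\mathtt w,\mathtt s\}$. Consider the quadruple comb context tree on $\mathcal{A}$, whose contexts are the words $\alpha^k\beta$ with $\alpha,\beta\in\mathcal{A}$, $\alpha\neq\beta$, $k\geq1$, and for each context $c$ let $q_c$ be a probability measure on $\mathcal{A}$ with $q_c(\gamma)>0$ for all $c$ and all $\gamma\in\mathcal{A}$. Let $(U_n)_{n\geq0}$ be the associated variable length Markov chain (VLMC), started from a right-infinite word $U_0$ with $X_{-1}=\mathtt n$, $X_0=\mathtt e$, and for $n\geq0$ let $X_n$ be the first (leftmost) letter of $U_n$, so that $U_n=X_nX_{n-1}\cdots X_0X_{-1}\cdots$. Assume that for all $\alpha\neq\beta$ in $\mathcal{A}$, $\lim_{n\to\infty}\prod_{k=1}^n q_{\alpha^k\beta}(\alpha)=0$. Define the breaking times $B_0=0$, $B_{n+1}=\inf\{k>B_n: X_k\neq X_{k-1}\}$; the sojourn times $T_0=0$, $T_n=B_n-B_{n-1}$ for $n\geq1$; the internal chain $J_0=\mathtt n\mathtt e$ and $J_n=X_{B_{n-1}}X_{B_n}$ for $n\geq1$ (a two-letter word, called a bend); and the bend process $(Z_j)_{j\geq0}$ by $Z_0=\mathtt n\mathtt e$ and, for $j\geq1$, $Z_j=\alpha\beta$ where $\beta=X_j$ and $\alpha$ is the first letter different from $\beta$ in the sequence $X_{j-1},X_{j-2},\dots$. Then $(J_n,T_n)_{n\geq0}$ is a Markov renewal chain on the set of bends $\{\alpha\beta:\alpha,\beta\in\mathcal{A},\alpha\neq\beta\}$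 with semi-Markov kernel \[ p_{\beta\alpha,\alpha\gamma}(k)=\Big(\prod_{j=1}^{k-1}q_{\alpha^j\beta}(\alpha)\Big)\,q_{\alpha^k\beta}(\gamma)\qquad(\beta\neq\alpha,\ \gamma\neq\alpha,\ k\geq1), \] all other kernel entries being $0$; $(Z_j)_{j\geq0}$ is the semi-Markov chain associated with $(J_n,T_n)_{n\geq0}$; and $(J_n,B_n)_{n\geq0}$ is a Markov additive process.
   Context: A VLMC defined by a context tree $\mathcal{T}$ (a saturated tree of finite words on $\mathcal{A}$ with at most countably many infinite branches; contexts are its leaves and infinite branches) and probability measures $(q_c)_c$ indexed by the contexts is the Markov chain $(U_n)$ on right-infinite words over $\mathcal{A}$ with transitions $\mathbb{P}(U_{n+1}=\alpha U_n\mid U_n)=q_{\mathrm{pref}(U_n)}(\alpha)$, where $\mathrm{pref}(w)$ is the unique context that is a prefix of $w$ (for the quadruple comb, $\mathrm{pref}(w)=\alpha^k\beta$ when $w$ begins with exactly $k$ copies of $\alpha$ followed by $\beta\neq\alpha$). Letters are identified with the vectors $\mathtt e=(1,0)$, $\mathtt n=(0,1)$, $\mathtt w=-\mathtt e$, $\mathtt s=-\mathtt n$ of $\mathbb{Z}^2$, and $S_n=\sum_{\ell=1}^nX_\ell$ is the two-dimensional persistent random walk. A Markov chain $(J_n,T_n)_{n\geq0}$ on $E\times\mathbb{N}$ is a Markov renewal chain if $\mathbb{P}(J_{n+1}=b,T_{n+1}=k\mid J_n=a,T_n=j)=\mathbb{P}(J_{n+1}=b,T_{n+1}=k\mid J_n=a)=:p_{a,b}(k)$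 for all $n,a,b,j,k$, with $p_{a,b}(0)=0$; $(p_{a,b}(k))$ is its semi-Markov kernel. If $T_0=0$ and $B_n=\sum_{i=0}^nT_i$, the associated semi-Markov chain is $(Z_j)_{j\geq0}$ with $Z_j=J_n$ for $B_n\leq j<B_{n+1}$. A Markov chain $(J_n,B_n)_{n\geq0}$ on $E\times\mathbb{N}$ is a Markov additive process if $(J_n,B_n-B_{n-1})_n$ is a Markov renewal chain. *)

From HB Require Import structures.
From mathcomp Require Import all_boot all_order all_algebra.
From mathcomp Require Import all_classical all_reals all_analysis.
Set Implicit Arguments. Unset Strict Implicit. Unset Printing Implicit Defensive.
Import Order.TTheory GRing.Theory Num.Theory.
Local Open Scope classical_set_scope.
Local Open Scope ring_scope.

Definition letter := 'I_4.
Definition nL : letter := @Ordinal 4 0 isT.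
Definition eL : letter := @Ordinal 4 1 isT.
Definition wL : letter := @Ordinal 4 2 isT.
Definition sL : letter := @Ordinal 4 3 isT.
Definition bend := (letter * letter)%type.

(* extended sequence: ext w 0 = X_{-1} = n, ext w (i+1) = X_i *)
Definition ext (w : nat -> letter) (i : nat) : letter :=
  match i with 0 => nL | i'.+1 => w i' end.

(* the finite prefix X_n X_{n-1} ... X_0 X_{-1} of U_n *)
Definition Uprefix (w : nat -> letter) (n : nat) : seq letter :=
  [seq ext w i | i <- rev (iota 0 n.+2)].

(* pref(U_n) = alpha^k beta : alpha = X_n, k = number of leading copies of
   alpha, beta = the letter following them. *)
Definition ctx_k (w : nat -> letter) (n : nat) : nat :=
  find (fun y => y != w n) (Uprefix w n).
Definition ctx_beta (w : nat -> letter) (n : nat) : letter :=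
  nth nL (Uprefix w n) (ctx_k w n).

(* first breaking time strictly after b: inf {k > b | X_k <> X_{k-1}},
   None if this set is empty (infimum = +oo) *)
Definition next_break (w : nat -> letter) (b : nat) : option nat :=
  match pselect (exists k, (b < k)%N && (w k != w k.-1)) with
  | left H => Some (ex_minn H)
  | right _ => None
  end.

Fixpoint brk (w : nat -> letter) (n : nat) : option nat :=
  match n with
  | 0 => Some 0%N
  | n'.+1 => obind (next_break w) (brk w n')
  end.

Definition sojourn (w : nat -> letter) (n : nat) : option nat :=
  match n with
  | 0 => Some 0%N
  | n'.+1 => match brk w n'.+1, brk w n' with
             | Some b', Some b => Some (b' - b)%N
             | _, _ => None
             end
  end.

Definition jump (w : nat -> letter) (n : nat) : option bend :=
  match n with
  | 0 => Some (nL, eL)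
  | n'.+1 => match brk w n', brk w n'.+1 with
             | Some b, Some b' => Some (w b, w b')
             | _, _ => None
             end
  end.

Definition bendproc (w : nat -> letter) (j : nat) : bend :=
  match j with
  | 0 => (nL, eL)
  | j'.+1 => (head nL [seq y <- [seq ext w i | i <- rev (iota 0 j'.+2)]
                      | y != w j'.+1], w j'.+1)
  end.

(* q a b k g stands for q_{a^k b}(g) *)
Definition pkernel {R : realType} (q : letter -> letter -> nat -> letter -> R)
    (x y : bend) (k : nat) : R :=
  let: (b, a) := x in let: (a', g) := y in
  if [&& b != a, a' == a, g != a & (0 < k)%N]
  then (\prod_(1 <= j < k) q a b j a) * q a b k g
  else 0.

Section Processes.
Context {d : measure_display} {Omega : measurableType d} {R : realType}.
Variable P : probability Omega R.

(* cylinder event {Y_0 = x_0, ..., Y_n = x_n}; None encodes an undefined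
   (infinite) value *)
Definition path_ev {S : Type} (Y : nat -> Omega -> option S) (x : nat -> S)
    (n : nat) : set Omega :=
  [set om | forall i, (i <= n)%N -> Y i om = Some (x i)].

(* (time-homogeneous) Markov chain with values in S:
   P(Y_{n+1} = y | Y_0..Y_n) = pi(Y_n, y), stated multiplicatively *)
Definition markov_chain {S : Type} (Y : nat -> Omega -> option S) : Prop :=
  exists pi : S -> S -> R, forall n (x : nat -> S),
    P (path_ev Y x n.+1) = ((pi (x n) (x n.+1))%:E * P (path_ev Y x n))%E.

Definition pairo {S T : Type} (a : option S) (b : option T) : option (S * T) :=
  match a, b with Some a', Some b' => Some (a', b') | _, _ => None end.

(* Markov renewal chain (J_n, T_n) with semi-Markov kernel p:
   (J,T) is Markov and
   P(J_{n+1}=b, T_{n+1}=k | J_0,T_0,...,J_n=a,T_n=j) = p a b k,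
   stated multiplicatively; and p a b 0 = 0. *)
Definition markov_renewal {S : Type} (J : nat -> Omega -> option S)
    (T : nat -> Omega -> option nat) (p : S -> S -> nat -> R) : Prop :=
  (forall a b, p a b 0%N = 0) /\
  forall n (x : nat -> S * nat),
    P (path_ev (fun i om => pairo (J i om) (T i om)) x n.+1)
    = ((p (x n).1 (x n.+1).1 (x n.+1).2)%:E
      * P (path_ev (fun i om => pairo (J i om) (T i om)) x n))%E.

Fixpoint Bsum (T : nat -> Omega -> option nat) (n : nat) (om : Omega) : option nat :=
  match n with
  | 0 => T 0%N om
  | n'.+1 => obind (fun b => omap (addn b) (T n'.+1 om)) (Bsum T n' om)
  end.

(* Z is the semi-Markov chain associated with (J,T): T_0 = 0 and
   Z_j = J_n for B_n <= j < B_{n+1} (B_{n+1} = None meaning +oo) *)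
Definition semi_markov_of {S : Type} (J : nat -> Omega -> option S)
    (T : nat -> Omega -> option nat) (Z : nat -> Omega -> S) : Prop :=
  (forall om, T 0%N om = Some 0%N) /\
  forall om n j b, Bsum T n om = Some b -> (b <= j)%N ->
    (forall b', Bsum T n.+1 om = Some b' -> (j < b')%N) ->
    J n om = Some (Z j om).

Definition increments (B : nat -> Omega -> option nat) (n : nat) (om : Omega)
    : option nat :=
  match n with
  | 0 => B 0%N om
  | n'.+1 => match B n'.+1 om, B n' om with
             | Some b', Some b => Some (b' - b)%N
             | _, _ => None
             end
  end.

Definition markov_additive {S : Type} (J : nat -> Omega -> option S)
    (B : nat -> Omega -> option nat) : Prop :=
  markov_chain (fun n om => pairo (J n om) (B n om)) /\
  exists p : S -> S -> nat -> R, markov_renewal J (increments B) p.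

End Processes.

From HB Require Import structures.
From mathcomp Require Import all_boot all_order all_algebra.
From mathcomp Require Import all_classical all_reals all_analysis.
From mathcomp Require Import zify.
Import Order.TTheory GRing.Theory Num.Theory.

(* Everything is pathwise.  Given the values of (J_i, T_i) for i <= n, the
   letters X_0, ..., X_(B_n) are determined, so the corresponding event is a
   cylinder of X.  The event at time n+1 extends this cylinder by a run of the
   letter alpha = X_(B_n) up to time B_n + k - 1, followed by gamma.  Along the
   run the context of U_(B_n + j - 1) is alpha^j beta with beta = X_(B_n - 1), so
   the chain rule of the VLMC produces the factor
   prod_(j < k) q_(alpha^j beta)(alpha) * q_(alpha^k beta)(gamma), whatever the
   earlier history.  The bend process equals J_n on [B_n, B_(n+1)), and B_n is
   the partial sum of the T_i, which gives the two other assertions.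
   Infinite breaking times are encoded by None. *)

Set Implicit Arguments. Unset Strict Implicit. Unset Printing Implicit Defensive.

Lemma pairo_Some (S T : Type) (a : option S) (b : option T) (p : S * T) :
  pairo a b = Some p <-> a = Some p.1 /\ b = Some p.2.
Proof.
case: a b p => [a|] [b|] [a' b'] /=; split=> //; try by case.
  by case=> -> ->.
by case=> -[->] [->].
Qed.

Lemma forall_le0 (Q : nat -> Prop) : (forall i, (i <= 0)%N -> Q i) <-> Q 0%N.
Proof. by split=> [|Q0 [|i]] //; apply. Qed.

Lemma forall_leS (Q : nat -> Prop) n :
  (forall i, (i <= n.+1)%N -> Q i) <-> (forall i, (i <= n)%N -> Q i) /\ Q n.+1.
Proof.
split=> [allQ|[allQ QSn] i lei]; first by split=> [i lei|]; apply: allQ; lia.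
by have [->|neq] := eqVneq i n.+1; [|apply: allQ; lia].
Qed.

Lemma find_nthE (T : Type) (x0 : T) (a : pred T) (s : seq T) j :
  (j < size s)%N -> a (nth x0 s j) -> (forall i, (i < j)%N -> ~~ a (nth x0 s i)) ->
  find a s = j.
Proof.
move=> ltjs aj before; apply/eqP; rewrite eqn_leq; apply/andP; split.
  by rewrite leqNgt; apply/negP => /(before_find x0); rewrite aj.
rewrite leqNgt; apply/negP => /before; rewrite nth_find //.
by apply/(has_nthP x0); exists j.
Qed.

Lemma head_filter (T : Type) (x0 : T) (a : pred T) (s : seq T) :
  head x0 [seq z <- s | a z] = nth x0 s (find a s).
Proof. by elim: s => [|z s IH] //=; case: (a z). Qed.

(** * Breaking times *)

Definition agree_upto (w w' : nat -> letter) (N : nat) : Prop :=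
  forall i, (i <= N)%N -> w i = w' i.

Section BreakingTimes.
Variable w : nat -> letter.

Lemma next_breakP M N : next_break w M = Some N <->
  [/\ (M < N)%N, w N != w N.-1 & forall m, (M < m < N)%N -> w m = w m.-1].
Proof.
rewrite /next_break; case: pselect => [ex|noex]; split => //.
- case=> <-; case: ex_minnP => m /andP[ltMm wm] minm; split => // m' /andP[lt1 lt2].
  apply/eqP; apply: contraTT lt2 => wm'; rewrite -leqNgt; apply: minm.
  by rewrite lt1 wm'.
- case=> ltMN wN run; congr Some; case: ex_minnP => m /andP[ltMm wm] minm.
  apply/eqP; rewrite eqn_leq minm ?ltMN ?wN //= leqNgt; apply/negP => ltmN.
  by move/eqP: wm; apply; apply: run; rewrite ltMm ltmN.
- by case=> ltMN wN _; case: noex; exists N; rewrite ltMN wN.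
Qed.

Lemma next_break_None M : next_break w M = None ->
  forall m, (M < m)%N -> w m = w m.-1.
Proof.
rewrite /next_break; case: pselect => [//|noex] _ m ltMm.
apply/eqP/negPn/negP => wm.
by apply: noex; exists m; rewrite ltMm wm.
Qed.

Lemma run_const M N : (forall m, (M < m < N)%N -> w m = w m.-1) ->
  forall m, (M <= m < N)%N -> w m = w M.
Proof.
move=> run; elim=> [|m IH] /andP[leMm ltmN]; first by have -> : M = 0%N by lia.
have [->//|neM] := eqVneq M m.+1.
by rewrite run /=; [apply: IH|]; lia.
Qed.

Lemma next_break_const M N : next_break w M = Some N ->
  forall m, (M <= m < N)%N -> w m = w M.
Proof. by case/next_breakP=> _ _; apply: run_const. Qed.

Lemma next_break_run M k : (0 < k)%N ->
  next_break w M = Some (M + k)%N <->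
  (forall m, (M <= m < M + k)%N -> w m = w M) /\ w (M + k)%N != w M.
Proof.
move=> k_gt0; split=> [brkMk|[run wMk]].
  have /next_breakP[_ wMk _] := brkMk.
  split; first exact: next_break_const brkMk.
  by rewrite (next_break_const brkMk (m := (M + k).-1)) in wMk => //; lia.
apply/next_breakP; split; first lia.
  by rewrite [w (M + k).-1]run //; lia.
by move=> m lt; rewrite (run m) ?(run m.-1) //; lia.
Qed.

Lemma brkS_Some n N : brk w n.+1 = Some N ->
  exists2 M, brk w n = Some M & next_break w M = Some N.
Proof. by rewrite /=; case: (brk w n) => [M|] //= brkN; exists M. Qed.

Lemma jump_sojournS n M : brk w n = Some M -> forall (v : bend) k,
  jump w n.+1 = Some v /\ sojourn w n.+1 = Some k <->
  [/\ next_break w M = Some (M + k)%N, v.1 = w M & v.2 = w (M + k)%N].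
Proof.
move=> brkM [a g] k; rewrite /jump /sojourn /= brkM /=.
case nbM: (next_break w M) => [N|]; last by split=> -[].
have /next_breakP[ltMN _ _] := nbM.
split; first by case=> -[<- <-] [<-]; rewrite subnKC // ltnW.
by case=> -[->] -> ->; rewrite addKn.
Qed.

Lemma brk_sojournS n M N : brk w n = Some M ->
  brk w n.+1 = Some N <-> (M < N)%N /\ sojourn w n.+1 = Some (N - M)%N.
Proof.
move=> brkM; rewrite /sojourn /= brkM /=.
case nbM: (next_break w M) => [N'|]; last by split=> // -[].
split; first by case=> <-; case/next_breakP: nbM.
by case=> ltMN [diffE]; congr Some; lia.
Qed.

Lemma jump_brk n N : w 0%N = eL -> brk w n = Some N ->
  jump w n = Some (ext w N, w N) /\ ext w N != w N.
Proof.
move=> w0; case: n => [[<-]|n]; first by rewrite /= w0.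
case/brkS_Some=> M brkM nbM.
have /next_breakP[ltMN wN _] := nbM.
rewrite /jump /= brkM /= nbM; case: N ltMN wN nbM => [//|N] ltMN wN nbM /=.
have wNM : w N = w M by apply: (next_break_const nbM); lia.
by rewrite wNM eq_sym -wNM.
Qed.

End BreakingTimes.

Lemma brk_prefix (w w' : nat -> letter) n N : brk w n = Some N ->
  agree_upto w' w N -> brk w' n = Some N.
Proof.
elim: n N => [//|n IH] N /brkS_Some[M brkM nbM] ww'.
have /next_breakP[ltMN wN run] := nbM.
rewrite /= (IH M brkM) /=; last by move=> i le; apply: ww'; lia.
apply/next_breakP; split => //; first by rewrite !ww' //; lia.
by move=> m lt; rewrite !ww'; [exact: run|lia|lia].
Qed.

(** * Contexts and the bend process *)

Lemma nth_Uprefix (y : nat -> letter) p i : (i < p.+2)%N ->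
  nth nL (Uprefix y p) i = ext y (p.+1 - i).
Proof.
move=> ltip; rewrite /Uprefix (nth_map 0%N) ?size_rev ?size_iota //.
by rewrite nth_rev ?size_iota // nth_iota; [congr ext|]; lia.
Qed.

Lemma find_Uprefix (y : nat -> letter) p b c : (b <= p.+1)%N ->
  (forall i, (b <= i <= p)%N -> y i = c) -> ext y b != c ->
  find (fun z => z != c) (Uprefix y p) = (p.+1 - b)%N.
Proof.
move=> lebp run yb; apply: (find_nthE (x0 := nL)).
- by rewrite /Uprefix size_map size_rev size_iota; lia.
- by rewrite nth_Uprefix; [have -> : (p.+1 - (p.+1 - b) = b)%N by lia|lia].
- move=> i lti; rewrite nth_Uprefix; last by lia.
  have -> : (p.+1 - i = (p - i).+1)%N by lia.
  by rewrite /= run ?eqxx //; lia.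
Qed.

Lemma ctx_of_run (y : nat -> letter) b p : (b <= p)%N ->
  (forall i, (b <= i <= p)%N -> y i = y p) -> ext y b != y p ->
  ctx_k y p = (p.+1 - b)%N /\ ctx_beta y p = ext y b.
Proof.
move=> lebp run yb; have kE : ctx_k y p = (p.+1 - b)%N.
  by apply: find_Uprefix => //; lia.
by rewrite /ctx_beta kE nth_Uprefix; [have -> : (p.+1 - (p.+1 - b) = b)%N by lia|lia].
Qed.

Lemma bendproc_run (w : nat -> letter) b j : w 0%N = eL -> (b <= j)%N ->
  (forall i, (b <= i <= j)%N -> w i = w b) -> ext w b != w b ->
  bendproc w j = (ext w b, w b).
Proof.
move=> w0 lebj run wb; case: j lebj run => [|j] lebj run.
  have -> : b = 0%N by lia.
  by rewrite /= w0.
rewrite /bendproc -/(Uprefix w j) head_filter (run j.+1); last by lia.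
rewrite (find_Uprefix (b := b)) //; last by move=> i lei; apply: run; lia.
by rewrite nth_Uprefix; [have -> : (j.+1 - (j.+1 - b) = b)%N by lia|lia].
Qed.

Lemma jump_bendproc (w : nat -> letter) n b j : w 0%N = eL -> brk w n = Some b ->
  (b <= j)%N -> (forall b', brk w n.+1 = Some b' -> (j < b')%N) ->
  jump w n = Some (bendproc w j).
Proof.
move=> w0 brkb lebj before_next; have [-> wb] := jump_brk w0 brkb.
rewrite (bendproc_run w0 lebj) //.
case nbb: (next_break w b) => [b'|] i /andP[lebi leij].
  apply: (next_break_const nbb); rewrite lebi /=.
  by apply: leq_ltn_trans leij (before_next _ _); rewrite /= brkb.
apply: (run_const (N := j.+1)); last by lia.
by move=> m /andP[ltbm _]; apply: next_break_None nbb _ ltbm.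
Qed.

Lemma Bsum_sojourn (d : measure_display) (Omega : measurableType d)
    (X : nat -> Omega -> letter) n om :
  Bsum (fun n om => sojourn (X ^~ om) n) n om = brk (X ^~ om) n.
Proof.
elim: n => [//|n IH] /=; rewrite IH.
case: (brk _ n) => [M|] //=; case nbM: (next_break _ M) => [N|] //=.
by have /next_breakP[ltMN _ _] := nbM; congr Some; lia.
Qed.

(** * Path events of (J, T) and (J, B) *)

Definition jt_path (n : nat) (x : nat -> bend * nat) (w : nat -> letter) : Prop :=
  forall i, (i <= n)%N -> pairo (jump w i) (sojourn w i) = Some (x i).

Definition kernel_support (u v : bend) (k : nat) : bool :=
  [&& u.1 != u.2, v.1 == u.2, v.2 != u.2 & (0 < k)%N].

Definition extend_run (w : nat -> letter) (N k : nat) (a g : letter) (i : nat) : letter :=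
  if (i <= N)%N then w i else if (i < N + k)%N then a else g.

Lemma jt_pathS n x w : jt_path n.+1 x w <->
  jt_path n x w /\ (jump w n.+1 = Some (x n.+1).1 /\ sojourn w n.+1 = Some (x n.+1).2).
Proof. by rewrite /jt_path forall_leS pairo_Some. Qed.

Lemma jt_path_brk n x w : jt_path n x w -> exists N, brk w n = Some N.
Proof.
elim: n => [|n IH]; first by exists 0%N.
case/jt_pathS=> /IH[M brkM] /(jump_sojournS brkM)[nbM _ _].
by exists (M + (x n.+1).2)%N; rewrite /= brkM.
Qed.

Lemma jt_path_support n x w : w 0%N = eL -> jt_path n.+1 x w ->
  kernel_support (x n).1 (x n.+1).1 (x n.+1).2.
Proof.
move=> w0 /jt_pathS[path stepS]; have [M brkM] := jt_path_brk path.
have [jumpM bendM] := jump_brk w0 brkM.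
have /pairo_Some[] := path n (leqnn n); rewrite jumpM => -[xn] _.
have [nbM v1 v2] := (jump_sojournS brkM _ _).1 stepS.
have /next_breakP[ltM _ _] := nbM.
have k_gt0 : (0 < (x n.+1).2)%N by lia.
have [_ wMk] := (next_break_run _ _ k_gt0).1 nbM.
by rewrite /kernel_support -xn v1 v2 /= bendM eqxx wMk k_gt0.
Qed.

Lemma agree_extend_run w w0 N k a g : (0 < k)%N -> w0 N = a ->
  agree_upto w (extend_run w0 N k a g) (N + k) <->
  [/\ agree_upto w w0 N, (forall m, (N <= m < N + k)%N -> w m = a) & w (N + k)%N = g].
Proof.
rewrite /extend_run => k_gt0 w0N; split=> [agree|[agree run wg] i leiNk].
  split=> [i leiN|m /andP[leNm ltmNk]|].
  - by rewrite agree ?leiN //; lia.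
  - rewrite agree; last by lia.
    by case: ifP => [lemN|_]; [have -> : m = N by lia|rewrite ltmNk].
  - by rewrite agree //; case: ifP => [|_]; [lia|rewrite ltnn].
case: ifP => [leiN|/negbT gtiN]; first exact: agree.
case: ifP => [ltiNk|/negbT geiNk]; first by apply: run; lia.
by have -> : i = (N + k)%N by lia.
Qed.

Lemma jt_path_extend n x w0 N : w0 0%N = eL -> brk w0 n = Some N ->
  (forall w, w 0%N = eL -> jt_path n x w <-> agree_upto w w0 N) ->
  kernel_support (x n).1 (x n.+1).1 (x n.+1).2 ->
  forall w, w 0%N = eL -> jt_path n.+1 x w <->
    agree_upto w (extend_run w0 N (x n.+1).2 (w0 N) (x n.+1).1.2) (N + (x n.+1).2).
Proof.
move=> w00 brk0 cyl supp w w0e.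
have /pairo_Some[] := (cyl w0 w00).2 (fun _ _ => erefl) n (leqnn n).
rewrite (jump_brk w00 brk0).1 => -[xn] _.
move: supp; rewrite -xn jt_pathS cyl //.
case/and4P=> _ /eqP a_eq gNa k_gt0; rewrite agree_extend_run //.
split=> [[agree jump_soj]|[agree run wg]]; have brkN := brk_prefix brk0 agree.
  have [/(next_break_run _ _ k_gt0)[run _] _ wg] := (jump_sojournS brkN _ _).1 jump_soj.
  by split=> // m lem; rewrite run // agree.
have wN : w N = w0 N by apply: run; lia.
split=> //; apply/(jump_sojournS brkN); split; [|by rewrite wN a_eq|by rewrite wg].
apply/(next_break_run _ _ k_gt0); split=> [m lem|]; first by rewrite wN run.
by rewrite wg wN.
Qed.

Lemma jt_path_cylinder n x w0 N : w0 0%N = eL -> jt_path n x w0 -> brk w0 n = Some N ->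
  forall w, w 0%N = eL -> jt_path n x w <-> agree_upto w w0 N.
Proof.
elim: n N => [|n IH] N w00 path0 brk0 w w0e.
  case: brk0 => <-; split=> _ i; rewrite leqn0 => /eqP->; first by rewrite w0e.
  exact: (path0 0%N (leqnn 0)).
have [path0n stepS] := (jt_pathS _ _ _).1 path0; have [M brkM] := jt_path_brk path0n.
have extend := jt_path_extend w00 brkM (IH M w00 path0n brkM) (jt_path_support w00 path0).
have [nbM _ _] := (jump_sojournS brkM _ _).1 stepS.
move: brk0; rewrite /= brkM /= nbM => -[<-].
rewrite extend //; have agree0 := (extend w0 w00).1 path0.
by split=> agree i lei; rewrite agree // (agree0 i lei).
Qed.

Fixpoint admissible_times (x : nat -> bend * nat) (n : nat) : bool :=
  if n is n'.+1 then admissible_times x n' && ((x n').2 < (x n).2)%N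
  else (x 0%N).2 == 0%N.

Definition to_sojourns (x : nat -> bend * nat) (i : nat) : bend * nat :=
  ((x i).1, if i is i'.+1 then ((x i).2 - (x i').2)%N else (x i).2).

Definition jb_path (n : nat) (x : nat -> bend * nat) (w : nat -> letter) : Prop :=
  forall i, (i <= n)%N -> pairo (jump w i) (brk w i) = Some (x i).

Lemma jb_path_brk n x w : jb_path n x w -> brk w n = Some (x n).2.
Proof. by move/(_ n (leqnn n))/pairo_Some=> [_ ->]. Qed.

Lemma jb_pathE n x w :
  jb_path n x w <-> admissible_times x n /\ jt_path n (to_sojourns x) w.
Proof.
elim: n => [|n IH].
  rewrite /jb_path /jt_path !forall_le0 /= /to_sojourns; case: (x 0%N) => u t /=.
  by split=> [[<- <-]|[_ ->]].
rewrite /jb_path forall_leS -/(jb_path n x w) pairo_Some jt_pathS /=.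
split=> [[pathB [jS bS]]|[/andP[adm lt] [path [jS sS]]]].
  have [adm path] := IH.1 pathB.
  have [lt sS] := (brk_sojournS _ (jb_path_brk pathB)).1 bS.
  by rewrite adm lt.
have pathB := IH.2 (conj adm path).
by split=> //; split=> //; apply/(brk_sojournS _ (jb_path_brk pathB)).
Qed.

(** * The chain rule along a run *)

Local Open Scope classical_set_scope.
Local Open Scope ring_scope.

Definition step_prob {R : realType} (q : letter -> letter -> nat -> letter -> R)
    (y : nat -> letter) (m : nat) : R :=
  q (y m) (ctx_beta y m) (ctx_k y m) (y m.+1).

Lemma step_prob_run {R : realType} (q : letter -> letter -> nat -> letter -> R) y b p :
  (b <= p)%N -> (forall i, (b <= i <= p)%N -> y i = y p) -> ext y b != y p ->
  step_prob q y p = q (y p) (ext y b) (p.+1 - b)%N (y p.+1).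
Proof. by move=> lebp run yb; rewrite /step_prob; have [-> ->] := ctx_of_run lebp run yb. Qed.

Lemma pkernel_out {R : realType} (q : letter -> letter -> nat -> letter -> R) u v k :
  ~~ kernel_support u v k -> pkernel q u v k = 0.
Proof. by case: u v => [b a] [a' g]; rewrite /pkernel /kernel_support /= => /negbTE ->. Qed.

Lemma pkernel0 {R : realType} (q : letter -> letter -> nat -> letter -> R) u v :
  pkernel q u v 0 = 0.
Proof. by apply: pkernel_out; rewrite /kernel_support !andbF. Qed.

Lemma prod_step_extend_run {R : realType} (q : letter -> letter -> nat -> letter -> R)
    w0 N (v : bend) k :
  kernel_support (ext w0 N, w0 N) v k ->
  \prod_(m < k) step_prob q (extend_run w0 N k (w0 N) v.2) (N + m)
  = pkernel q (ext w0 N, w0 N) v k.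
Proof.
case: v => a' g /and4P[/= bend /eqP-> g_ne k_gt0].
have [k' kE] : exists k', k = k'.+1 by exists k.-1; lia.
rewrite /pkernel bend eqxx g_ne k_gt0 /= kE.
set y := extend_run w0 N k'.+1 (w0 N) g.
have y_run i : (N <= i < N + k'.+1)%N -> y i = w0 N.
  rewrite /y /extend_run => /andP[leNi ltiNk].
  by case: ifP => [leiN|_]; [have -> : i = N by lia|rewrite ltiNk].
have y_ext : ext y N = ext w0 N by rewrite /y; case: (N) => [|N'] //=; rewrite /extend_run leqnSn.
have step m : (m <= k')%N -> step_prob q y (N + m) = q (w0 N) (ext w0 N) m.+1 (y (N + m).+1).
  move=> lemk; have yNm : y (N + m) = w0 N by apply: y_run; lia.
  rewrite (step_prob_run q (b := N)); first by rewrite yNm y_ext; congr q; lia.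
  - by lia.
  - by move=> i lei; rewrite yNm y_run //; lia.
  - by rewrite y_ext yNm.
rewrite big_ord_recr /= step // -addnS.
have -> : y (N + k'.+1)%N = g by rewrite /y /extend_run ifF ?ltnn //; lia.
congr (_ * _); rewrite big_add1 /= big_mkord; apply: eq_bigr => i _.
by rewrite step ?y_run //; have := ltn_ord i; lia.
Qed.

Section VLMCLaw.
Variables (d : measure_display) (Omega : measurableType d) (R : realType).
Variables (P : probability Omega R) (q : letter -> letter -> nat -> letter -> R).
Variable X : nat -> Omega -> letter.
Hypothesis X0 : forall om, X 0%N om = eL.
Hypothesis law : forall n (x : nat -> letter),
  P [set om | forall i, (i <= n.+1)%N -> X i om = x i]
  = ((q (x n) (ctx_beta x n) (ctx_k x n) (x n.+1))%:E
    * P [set om | forall i, (i <= n)%N -> X i om = x i])%E.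

Definition cylinder (y : nat -> letter) (N : nat) : set Omega :=
  [set om | agree_upto (X ^~ om) y N].

Lemma cylinder_chain_rule y N k :
  P (cylinder y (N + k)) = ((\prod_(m < k) step_prob q y (N + m))%:E * P (cylinder y N))%E.
Proof.
elim: k => [|k IH]; first by rewrite big_ord0 addn0 mul1e.
rewrite addnS [P _]law -/(cylinder y (N + k)) IH big_ord_recr /= EFinM.
by rewrite muleA [t in (t * _)%E]muleC.
Qed.

Lemma P_jt_pathS n x :
  P [set om | jt_path n.+1 x (X ^~ om)]
  = ((pkernel q (x n).1 (x n.+1).1 (x n.+1).2)%:E * P [set om | jt_path n x (X ^~ om)])%E.
Proof.
have [[om0 path0]|nopath] := pselect (exists om, jt_path n x (X ^~ om)); last first.
  have E0 m : (n <= m)%N -> [set om | jt_path m x (X ^~ om)] = set0.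
    move=> lenm; apply/seteqP; split=> om // path.
    by apply: nopath; exists om => i lei; apply: path; lia.
  by rewrite !E0 ?measure0 ?mule0.
set w0 := X ^~ om0; have [N brk0] := jt_path_brk path0.
have cylN := jt_path_cylinder (X0 om0) path0 brk0.
have /pairo_Some[] := path0 n (leqnn n); rewrite (jump_brk (X0 om0) brk0).1 => -[xn] _.
have [supp|nsupp] := boolP (kernel_support (x n).1 (x n.+1).1 (x n.+1).2); last first.
  have -> : [set om | jt_path n.+1 x (X ^~ om)] = set0.
    apply/seteqP; split=> om // /(jt_path_support (X0 om)).
    by rewrite (negbTE nsupp).
  by rewrite measure0 pkernel_out ?mul0e.
set y := extend_run w0 N (x n.+1).2 (w0 N) (x n.+1).1.2.
have -> : [set om | jt_path n.+1 x (X ^~ om)] = cylinder y (N + (x n.+1).2).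
  by apply: eq_set => om; apply/propext/(jt_path_extend (X0 om0) brk0 cylN supp)/X0.
have -> : [set om | jt_path n x (X ^~ om)] = cylinder y N.
  apply: eq_set => om; apply/propext; rewrite cylN ?X0 //.
  by split=> agree i lei; rewrite agree // /y /extend_run lei.
rewrite cylinder_chain_rule -xn in supp *; congr (_%:E * _)%E.
exact: prod_step_extend_run.
Qed.

Lemma P_jb_pathS n x :
  P [set om | jb_path n.+1 x (X ^~ om)]
  = ((pkernel q (x n).1 (x n.+1).1 ((x n.+1).2 - (x n).2)%N)%:E
    * P [set om | jb_path n x (X ^~ om)])%E.
Proof.
have jbE m : [set om | jb_path m x (X ^~ om)] = if admissible_times x m
    then [set om | jt_path m (to_sojourns x) (X ^~ om)] else set0.
  case: ifP => adm; apply/seteqP; split=> om //=.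
  - by case/jb_pathE.
  - by move=> path; apply/jb_pathE.
  - by case/jb_pathE; rewrite adm.
rewrite !jbE /=; case: (admissible_times x n) => /=; last by rewrite measure0 mule0.
case: ifP => lt; first exact: P_jt_pathS.
have -> : ((x n.+1).2 - (x n).2 = 0)%N by lia.
by rewrite measure0 pkernel0 mul0e.
Qed.

End VLMCLaw.

Theorem mainTheorem2 (d : measure_display) (Omega : measurableType d)
  (R : realType) (P : probability Omega R)
  (q : letter -> letter -> nat -> letter -> R)
  (hq_pos : forall a b k g, a != b -> (0 < k)%N -> 0 < q a b k g)
  (hq_sum : forall a b k, a != b -> (0 < k)%N -> \sum_(g : letter) q a b k g = 1)
  (h_lim : forall a b, a != b ->
     (\prod_(1 <= k < n.+1) q a b k a) @[n --> \oo] --> 0)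
  (X : nat -> Omega -> letter)
  (hX_meas : forall i a, measurable [set om | X i om = a])
  (hX0 : forall om, X 0%N om = eL)
  (hlaw : forall n (x : nat -> letter),
     P [set om | forall i, (i <= n.+1)%N -> X i om = x i]
     = ((q (x n) (ctx_beta x n) (ctx_k x n) (x n.+1))%:E
       * P [set om | forall i, (i <= n)%N -> X i om = x i])%E) :
  let J := fun n om => jump (fun i => X i om) n in
  let T := fun n om => sojourn (fun i => X i om) n in
  let B := fun n om => brk (fun i => X i om) n in
  let Z := fun j om => bendproc (fun i => X i om) j in
  markov_renewal P J T (pkernel q) /\ semi_markov_of J T Z /\
  markov_additive P J B.
Proof.
move=> J T B Z.
have renewal : markov_renewal P J T (pkernel q).
  by split=> [u v|n x]; [exact: pkernel0|exact: (P_jt_pathS hX0 hlaw n x)].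
split=> //; split.
  by split=> // om n j b; rewrite /T !Bsum_sojourn; exact: jump_bendproc (hX0 om).
split.
  exists (fun u v => pkernel q u.1 v.1 (v.2 - u.2)%N) => n x.
  exact: (P_jb_pathS hX0 hlaw n x).
by exists (pkernel q); have -> : increments B = T by apply/funext => -[|n]; apply/funext.
Qed.
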